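(* Let $\mathcal{X}\subset\mathbb{R}$ be finite or countable, $\Theta\subset\mathbb{R}^m$, and for each $\theta\in\Theta$ let $P^\theta=(p^\theta_{ij})_{i,j\in\mathcal{X}}$ be the transition matrix of a time-homogeneous Markov chain $(X_n)$ on $\mathcal{X}$ which is ergodic under $\mathbb{P}^\theta$. Let $\hat F^\theta(x,x')$, $x,x'\in\mathbb{R}$, denote the distribution function of $(X_0,X_1)$ when $X_0$ has the (unique) invariant distribution $\pi^\theta$ of the chain, i.e. $\hat F^\theta(x,x')=\sum_{i\le x}\sum_{j\le x'}\pi^\theta(i)p^\theta_{ij}$. If all transition probabilities $p^\theta_{ij}$, $i,j\in\mathcal{X}$, are Borel measurable in $\theta$, then for each pair $(x,x')\in\mathbb{R}^2$ the function $\theta\mapsto\hat F^\theta(x,x')$ is Borel measurable.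
   Context: A time-homogeneous Markov chain $(X_n)$ is called ergodic if there exists a probability measure $\mu$, not depending on the initial distribution $\mu_0$, such that for every initial distribution $\mu_0$, $\lim_{t\to\infty}\|\mathbb{P}_{\mu_0}(X_t\in\cdot)-\mu\|_{TV}=0$, where $\|\mu-\nu\|_{TV}=2\sup_A(\mu(A)-\nu(A))$; $\mu$ is then the unique invariant distribution. *)

From HB Require Import structures.
From mathcomp Require Import all_boot all_order all_algebra.
From mathcomp Require Import all_classical all_reals all_analysis.
Set Implicit Arguments. Unset Strict Implicit. Unset Printing Implicit Defensive.
Import Order.TTheory GRing.Theory Num.Theory.
Local Open Scope classical_set_scope.
Local Open Scope ring_scope.

Section Defs.
Variable R : realType.
Variable X : set R.

Definition is_distr (mu : R -> R) : Prop :=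
  (forall i, X i -> 0 <= mu i) /\ (\esum_(i in X) (mu i)%:E = 1)%E.

Definition stochastic (P : R -> R -> R) : Prop :=
  forall i, X i -> is_distr (P i).

Definition mc_step (P : R -> R -> R) (mu : R -> R) : R -> R :=
  fun j => fine (\esum_(i in X) (mu i * P i j)%:E).

Definition mc_law (P : R -> R -> R) (mu0 : R -> R) (t : nat) : R -> R :=
  iter t (mc_step P) mu0.

Definition mc_mass (mu : R -> R) (A : set R) : \bar R :=
  \esum_(i in X `&` A) (mu i)%:E.

Definition tv_norm (mu nu : R -> R) : \bar R :=
  (2%:E * ereal_sup [set (mc_mass mu A - mc_mass nu A)%E | A in [set: set R]])%E.

Definition ergodic (P : R -> R -> R) : Prop :=
  exists mu, is_distr mu /\
    forall mu0, is_distr mu0 ->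
      (fun t => tv_norm (mc_law P mu0 t) mu) @ \oo --> 0%E.

Definition is_invariant (P : R -> R -> R) (pi : R -> R) : Prop :=
  is_distr pi /\ forall j, X j -> mc_step P pi j = pi j.

Definition Fhat (P : R -> R -> R) (pi : R -> R) (x x' : R) : R :=
  fine (\esum_(i in [set i | X i /\ i <= x])
          \esum_(j in [set j | X j /\ j <= x']) (pi i * P i j)%:E).
End Defs.

(* Borel measurability of f restricted to Theta (trace sigma-algebra) *)
Definition measurable_on (d : measure_display) (T : measurableType d)
    (R : realType) (Theta : set T) (f : T -> R) : Prop :=
  forall Y : set R, measurable Y ->
    exists B : set T, measurable B /\ Theta `&` f @^-1` Y = Theta `&` B.

From HB Require Import structures.
From mathcomp Require Import all_boot all_order all_algebra.
From mathcomp Require Import all_classical all_reals all_analysis.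
From mathcomp Require Import measurable_realfun ring.
Set Implicit Arguments. Unset Strict Implicit. Unset Printing Implicit Defensive.
Import Order.TTheory GRing.Theory Num.Theory.
Import numFieldNormedType.Exports.
Local Open Scope classical_set_scope.
Local Open Scope ring_scope.

(** Fhat is a countable double sum of the products pi(i) p_ij, so it is enough
   that each pi(i) is measurable in theta. Since total variation dominates
   pointwise distance, ergodicity makes pi(i) the pointwise limit, as t grows,
   of the law at time t of the chain started at a fixed state; by induction on t
   that law is a countable sum of products of transition probabilities, hence
   measurable. As Theta need not be measurable, everything is done for the
   trace sigma-algebra on Theta. *)

Section esum_lemmas.
Context (R : realType).
Local Open Scope ereal_scope.

Lemma esum_ge_term (I : choiceType) (S : set I) (a : I -> \bar R) j :
  S j -> a j <= \esum_(i in S) a i.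
Proof.
move=> Sj; apply: esum_ge; exists [set j]; last by rewrite fsbig_set1.
by split; [exact: finite_set1 | move=> _ ->].
Qed.

Lemma esumZl (I : choiceType) (S : set I) (c : R) (f : I -> R) : (0 <= c)%R ->
  \esum_(i in S) (c * f i)%:E = c%:E * \esum_(i in S) (f i)%:E.
Proof.
move=> c0; rewrite /esum -ereal_supZl//; last first.
  by apply/set0P; exists 0; exists set0; [exact: fsets_set0 | rewrite fsbig_set0].
have sumZ A : finite_set A ->
    \sum_(i \in A) (c * f i)%:E = c%:E * \sum_(i \in A) (f i)%:E.
  by move=> finA; rewrite !fsumEFin// -EFinM mulr_fsumr.
congr ereal_sup; apply/seteqP; split.
- move=> _ [A FA <-]; exists (\sum_(i \in A) (f i)%:E); first by exists A.
  by rewrite sumZ//; case: FA.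
- by move=> _ [_ [A FA <-] <-]; exists A => //; rewrite sumZ//; case: FA.
Qed.

Lemma esum_swap (I J : choiceType) (S : set I) (S' : set J) (a : I -> J -> \bar R) :
  (forall i j, S i -> S' j -> 0 <= a i j) ->
  \esum_(i in S) \esum_(j in S') a i j = \esum_(j in S') \esum_(i in S) a i j.
Proof.
move=> a0; rewrite esum_esum// (esum_esum (a := fun j i => a i j)); last first.
  by move=> j i S'j Si; exact: a0.
rewrite (reindex_esum (S' `*`` (fun=> S)) _ (fun x => (x.2, x.1)))//; split=> //=.
- by move=> [i j] [/=].
- by move=> [i1 i2] [j1 j2] /= _ _ [] -> ->.
- by move=> [j i] [S'j Si] /=; exists (i, j).
Qed.

End esum_lemmas.

Section measurable_esum.
Context d (T : measurableType d) (R : realType).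
Local Open Scope ereal_scope.

Lemma measurable_fun_esum (D : set T) (I : choiceType) (S : set I)
    (a : I -> T -> \bar R) :
  countable S -> (forall i, S i -> measurable_fun D (a i)) ->
  measurable_fun D (fun t => \esum_(i in S) a i t).
Proof.
move=> cS ma.
(* emeasurable_fsum wants every term measurable, so zero out those outside S *)
pose a' i : T -> \bar R := if `[< S i >] then a i else cst 0.
have ma' i : measurable_fun D (a' i).
  by rewrite /a'; case: asboolP => [/ma//|_]; exact: measurable_cst.
have -> : (fun t => \esum_(i in S) a i t) = (fun t => \esum_(i in S) a' i t).
  by apply/funext => t; apply: eq_esum => i Si; rewrite /a' asboolT.
have cF : countable (fsets S).
  have -> : fsets S = [set A | A `<=` S /\ finite_set A].
    by apply/seteqP; split=> A [].
  exact: countable_finite_subset.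
(* esum is a supremum over the countably many finite subsets of S, listed by F *)
have [g gsurj] := pcard_surjP cF.
pose F n := if `[< fsets S (g n) >] then g n else set0.
have FS n : fsets S (F n).
  by rewrite /F; case: asboolP => // _; exact: fsets_set0.
have Fsurj A : fsets S A -> exists n, F n = A.
  by move=> SA; have [n _ gn] := gsurj A SA; exists n; rewrite /F gn asboolT.
have -> : (fun t => \esum_(i in S) a' i t) =
    (fun t => esups (fun n => \sum_(i \in F n) a' i t) 0%N).
  apply/funext => t; rewrite /esum /esups /=; congr ereal_sup.
  apply/seteqP; split.
  - by move=> _ [A SA <-]; have [n <-] := Fsurj A SA; exists n.
  - by move=> _ [n _ <-]; exists (F n).
apply: measurable_fun_esups => n.
by apply: emeasurable_fsum => //; case: (FS n).
Qed.

End measurable_esum.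

Section trace_sigma_algebra.
Context d (T : measurableType d) (Theta : set T).

(* The trace of the sigma-algebra on Theta, pulled back to T, so that library
   lemmas about [measurable_fun Theta] apply to [measurable_on Theta]. *)
Definition trace_sets : set (set T) :=
  [set A | exists B, measurable B /\ Theta `&` A = Theta `&` B].

Lemma sigma_algebra_trace_sets : sigma_algebra setT trace_sets.
Proof.
split.
- by exists set0.
- move=> A [B [mB AB]]; exists (~` B); split; first exact: measurableC.
  rewrite !setTD -!setDE -(set0U (Theta `\` A)) -(setDv Theta) -setDIr AB.
  by rewrite setDIr setDv set0U.
- move=> F /choice[B FB]; exists (\bigcup_n B n); split.
    by apply: bigcupT_measurable => n; case: (FB n).
  by rewrite !setI_bigcupr; apply: eq_bigcupr => n _; case: (FB n).
Qed.

Definition trace_space := g_sigma_algebraType trace_sets.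

Lemma measurable_trace_spaceE : @measurable _ trace_space = trace_sets.
Proof. exact: measurable_g_measurableTypeE sigma_algebra_trace_sets. Qed.

Lemma measurable_trace_Theta : @measurable _ trace_space Theta.
Proof. by rewrite measurable_trace_spaceE; exists setT; rewrite setIid setIT. Qed.

Lemma measurable_onP (R : realType) (f : T -> R) :
  measurable_on Theta f <-> measurable_fun (Theta : set trace_space) f.
Proof.
split=> [mf _ Y mY | mf Y mY].
- have [B [mB fB]] := mf Y mY.
  by rewrite measurable_trace_spaceE; exists B; rewrite setIA setIid.
- have := mf measurable_trace_Theta Y mY; rewrite measurable_trace_spaceE.
  by move=> [B [mB fB]]; exists B; rewrite -fB setIA setIid.
Qed.

End trace_sigma_algebra.

Section distributions.
Context (R : realType) (X : set R).
Local Open Scope ereal_scope.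

Definition point_distr (i0 : R) : R -> R := fun i => (i == i0)%:R.

Lemma point_distr_is_distr i0 : X i0 -> is_distr X (point_distr i0).
Proof.
move=> Xi0; have pt0 i : (0 <= point_distr i0 i)%R by rewrite /point_distr ler0n.
split=> [i _|]; first exact: pt0.
rewrite (esumID [set i0]) => [|i _]; last by rewrite lee_fin.
rewrite (_ : X `&` [set i0] = [set i0]); last by apply/seteqP; split=> [i []|i ->].
rewrite esum_set1 ?lee_fin// esum1 ?adde0 /point_distr ?eqxx//.
by move=> i [_ /eqP/negbTE ->].
Qed.

Lemma is_distr_neq0 mu : is_distr X mu -> X !=set0.
Proof.
move=> [_ mu1]; apply/set0P/eqP => X0; move: mu1.
by rewrite X0 esum_set0 => /eqP; rewrite eqe eq_sym oner_eq0.
Qed.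

Lemma mc_mass_set1 mu j : X j -> (0 <= mu j)%R ->
  mc_mass X mu [set j] = (mu j)%:E.
Proof.
move=> Xj mu0; rewrite /mc_mass (_ : X `&` [set j] = [set j]) ?esum_set1//.
by apply/seteqP; split=> [i []|i ->].
Qed.

Lemma mc_mass_setC1 mu j : is_distr X mu -> X j ->
  mc_mass X mu (~` [set j]) = 1 - (mu j)%:E.
Proof.
move=> [mu0 mu1] Xj.
have := esumID [set j] X (fun i => (mu i)%:E) (fun i Xi => mu0 i Xi).
rewrite mu1 -/(mc_mass X mu [set j]) -/(mc_mass X mu (~` [set j])).
by rewrite mc_mass_set1 ?mu0// => ->; rewrite addeAC subee// add0e.
Qed.

Lemma tv_norm_ge_dist a b j : is_distr X a -> is_distr X b -> X j ->
  (`|a j - b j|)%:E <= tv_norm X a b.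
Proof.
move=> da db Xj; have [a0 _] := da; have [b0 _] := db.
pose S := [set mc_mass X a A - mc_mass X b A | A in [set: set R]].
have S0 : 0 <= ereal_sup S.
  apply: ereal_sup_ubound; exists set0 => //.
  by rewrite /mc_mass !setI0 !esum_set0 subee.
apply: (@le_trans _ _ (ereal_sup S)); last first.
  by rewrite /tv_norm -/S lee_pemull// lee_fin ler1n.
apply: ereal_sup_ubound; have [ba|ab] := leP (b j) (a j).
- exists [set j] => //; rewrite !mc_mass_set1 ?a0 ?b0//.
  by rewrite ger0_norm ?subr_ge0// EFinB.
- exists (~` [set j]) => //; rewrite !mc_mass_setC1//.
  by rewrite ltr0_norm ?subr_lt0// -!EFinB opprB; congr EFin; ring.
Qed.

Lemma tv_norm_cvg_pointwise (a_ : nat -> R -> R) b j :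
  (forall t, is_distr X (a_ t)) -> is_distr X b -> X j ->
  tv_norm X (a_ t) b @[t --> \oo] --> 0 -> a_ t j @[t --> \oo] --> b j.
Proof.
move=> da db Xj tv0; apply/subr_cvg0/norm_cvg0P.
have dist0 : (`|a_ t j - b j|)%:E @[t --> \oo] --> 0.
  apply: (squeeze_cvge (f := cst 0) _ (cvg_cst _) tv0); apply: nearW => t.
  by rewrite /= lee_fin normr_ge0 tv_norm_ge_dist.
exact: (fine_cvg dist0).
Qed.

End distributions.

Section markov_chain.
Context (R : realType) (X : set R) (P : R -> R -> R).
Local Open Scope ereal_scope.

Lemma eq_mc_step mu mu' j : {in X, mu =1 mu'} ->
  mc_step X P mu j = mc_step X P mu' j.
Proof. by move=> e; congr fine; apply: eq_esum => i /mem_set Xi; rewrite e. Qed.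

Lemma mc_law_invariant pi t j : (forall i, X i -> mc_step X P pi i = pi i) ->
  X j -> mc_law X P pi t j = pi j.
Proof.
move=> inv; elim: t j => [//|t IH] j Xj; rewrite /mc_law /=.
by rewrite (@eq_mc_step _ pi) ?inv// => i /set_mem /IH.
Qed.

Hypothesis sP : stochastic X P.

Lemma stochastic_ge0 i j : X i -> X j -> (0 <= P i j)%R.
Proof. by move=> Xi Xj; case: (sP Xi) => P0 _; exact: P0. Qed.

Lemma stochastic_le1 i j : X i -> X j -> (P i j <= 1)%R.
Proof.
move=> Xi Xj; rewrite -lee_fin; have [_ <-] := sP Xi.
exact: (esum_ge_term (fun j => (P i j)%:E)).
Qed.

Lemma mc_step_esum_ge0 mu j : is_distr X mu -> X j ->
  0 <= \esum_(i in X) (mu i * P i j)%:E.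
Proof.
move=> [mu0 _] Xj; apply: esum_ge0 => i Xi.
by rewrite lee_fin mulr_ge0 ?mu0 ?stochastic_ge0.
Qed.

Lemma mc_step_esum_le1 mu j : is_distr X mu -> X j ->
  \esum_(i in X) (mu i * P i j)%:E <= 1.
Proof.
move=> [mu0 <-] Xj; apply: le_esum => i Xi.
by rewrite lee_fin ler_piMr ?mu0 ?stochastic_le1.
Qed.

Lemma mc_stepE mu j : is_distr X mu -> X j ->
  (mc_step X P mu j)%:E = \esum_(i in X) (mu i * P i j)%:E.
Proof.
move=> dmu Xj; apply: fineK; rewrite ge0_fin_numE ?mc_step_esum_ge0//.
by rewrite (le_lt_trans (mc_step_esum_le1 dmu Xj)) ?ltry.
Qed.

Lemma is_distr_mc_step mu : is_distr X mu -> is_distr X (mc_step X P mu).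
Proof.
move=> dmu; have [mu0 mu1] := dmu; split=> [j Xj|].
  by rewrite -lee_fin mc_stepE// mc_step_esum_ge0.
rewrite (eq_esum (fun j => mc_stepE dmu)) esum_swap => [|i j Xi Xj]; last first.
  by rewrite lee_fin mulr_ge0 ?mu0 ?stochastic_ge0.
rewrite -mu1; apply: eq_esum => i Xi; have [_ Pi1] := sP Xi.
by rewrite esumZl ?mu0// Pi1 mule1.
Qed.

Lemma is_distr_mc_law mu0 t : is_distr X mu0 -> is_distr X (mc_law X P mu0 t).
Proof. by move=> d0; elim: t => [//|t]; exact: is_distr_mc_step. Qed.

(* The law started at pi is constantly pi, so pi is the limit given by ergodicity. *)
Lemma ergodic_mc_law_cvg pi mu0 j : ergodic X P -> is_invariant X P pi ->
  is_distr X mu0 -> X j -> mc_law X P mu0 t j @[t --> \oo] --> pi j.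
Proof.
move=> [mu [dmu cvg_mu]] [dpi inv] d0 Xj.
have law_cvg nu : is_distr X nu -> mc_law X P nu t j @[t --> \oo] --> mu j.
  move=> dnu; apply: tv_norm_cvg_pointwise dmu Xj (cvg_mu nu dnu) => t.
  exact: is_distr_mc_law.
have law_pi : mc_law X P pi t j @[t --> \oo] --> pi j.
  rewrite (_ : (fun t => _) = cst (pi j)); first exact: cvg_cst.
  by apply/funext => t; exact: mc_law_invariant.
have -> : pi j = mu j by apply: cvg_unique law_pi (law_cvg pi dpi).
exact: law_cvg.
Qed.

End markov_chain.

Section measurable_chain.
Context d (T : measurableType d) (R : realType) (X : set R) (D : set T)
  (p : T -> R -> R -> R).
Hypothesis cX : countable X.
Hypothesis mp : forall i j, X i -> X j -> measurable_fun D (fun t => p t i j).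

Lemma measurable_mc_law mu0 t j : X j ->
  measurable_fun D (fun th => mc_law X (p th) mu0 t j).
Proof.
elim: t j => [|t IH] j Xj; first exact: measurable_cst.
apply: measurableT_comp => //; apply: measurable_fun_esum => // i Xi.
by apply/measurable_EFinP; apply: measurable_funM; [exact: IH | exact: mp].
Qed.

Lemma measurable_invariant_distr (pi : T -> R -> R) mu0 j :
  (forall th, D th -> stochastic X (p th)) ->
  (forall th, D th -> ergodic X (p th)) ->
  (forall th, D th -> is_invariant X (p th) (pi th)) ->
  is_distr X mu0 -> X j -> measurable_fun D (fun th => pi th j).
Proof.
move=> sp ep ip d0 Xj; apply/measurable_EFinP.
apply: (emeasurable_fun_cvg (fun t th => (mc_law X (p th) mu0 t j)%:E)).
  by move=> t; apply/measurable_EFinP; exact: measurable_mc_law.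
move=> th Dth.
have := ergodic_mc_law_cvg (sp th Dth) (ep th Dth) (ip th Dth) d0 Xj.
by apply: cvg_EFin; exact: nearW.
Qed.

Lemma measurable_Fhat (pi : T -> R -> R) x x' :
  (forall j, X j -> measurable_fun D (fun th => pi th j)) ->
  measurable_fun D (fun th => Fhat X (p th) (pi th) x x').
Proof.
have cXle y : countable [set i | X i /\ i <= y].
  by apply: sub_countable cX; apply: subset_card_le => i [].
move=> mpi; apply: measurableT_comp => //.
apply: measurable_fun_esum => // i [Xi _].
apply: measurable_fun_esum => // j [Xj _].
by apply/measurable_EFinP; apply: measurable_funM; [exact: mpi | exact: mp].
Qed.

End measurable_chain.

Theorem lemma6 (R : realType) (m : nat) (X : set R) (Theta : set (m.-tuple R))
    (p : m.-tuple R -> R -> R -> R) (piv : m.-tuple R -> R -> R) :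
  countable X ->
  (forall th, Theta th -> stochastic X (p th)) ->
  (forall th, Theta th -> ergodic X (p th)) ->
  (forall th, Theta th -> is_invariant X (p th) (piv th)) ->
  (forall i j, X i -> X j -> measurable_on Theta (fun th => p th i j)) ->
  forall x x' : R, measurable_on Theta (fun th => Fhat X (p th) (piv th) x x').
Proof.
move=> cX sp ep ip mp x x'.
have [->|/set0P[th0 Th0]] := eqVneq Theta set0.
  by move=> Y _; exists set0; rewrite !set0I.
have [i0 Xi0] := is_distr_neq0 (ip th0 Th0).1.
have mpT i j : X i -> X j ->
    measurable_fun (Theta : set (trace_space Theta)) (fun th => p th i j).
  by move=> Xi Xj; apply/measurable_onP; exact: mp.
apply/measurable_onP; apply: (measurable_Fhat cX mpT) => j Xj.
exact: (measurable_invariant_distr cX mpT sp ep ip (point_distr_is_distr Xi0)).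
Qed.
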